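(* Let $p>1$ and $h\in C[0,\infty)$ with $h(s)>0$ for $s>0$. Suppose that the equation $w''+h(s)|w|^{p-1}w=0$ has two solutions $\underline{w},\overline{w}$ on $[0,\infty)$ with $\underline{w}(0)=\overline{w}(0)=0$, $0<\underline{w}'(0)<\overline{w}'(0)$, and $\underline{w}(s)>0$, $\overline{w}(s)>0$ for $s>0$. Assume moreover that this equation has a solution $w$ with $w(0)=0$, $\underline{w}'(0)<w'(0)<\overline{w}'(0)$, $w(s)>0$ for $0<s<s_0$ and $w(s_0)=0$ for some $s_0>0$. Then for all sufficiently large $c>0$ the problem \[ w''+h(s)|w|^{p-1}w=0\ (0<s<c),\quad w(0)=w(c)=0,\quad w(s)>0\ (0<s<c), \] has two solutions $w_1,w_2$ with $\underline{w}'(0)<w_1'(0)<w'(0)<w_2'(0)<\overline{w}'(0)$. *)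

From Stdlib Require Import Reals Lra.
Open Scope R_scope.

Definition has_deriv_within (D : R -> Prop) (f : R -> R) (x d : R) : Prop :=
  forall eps : R, 0 < eps -> exists delta : R, 0 < delta /\
    forall y : R, D y -> y <> x -> Rabs (y - x) < delta ->
      Rabs ((f y - f x) / (y - x) - d) < eps.

Definition cont_within (D : R -> Prop) (f : R -> R) (x : R) : Prop :=
  forall eps : R, 0 < eps -> exists delta : R, 0 < delta /\
    forall y : R, D y -> Rabs (y - x) < delta -> Rabs (f y - f x) < eps.

(* |w|^(p-1) w ; equals 0 when w = 0 *)
Definition ppow (p w : R) : R := Rpower (Rabs w) (p - 1) * w.

Definition is_sol (h : R -> R) (p : R) (D : R -> Prop) (w dw : R -> R) : Prop :=
  forall s : R, D s ->
    has_deriv_within D w s (dw s) /\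
    has_deriv_within D dw s (- (h s * ppow p (w s))).

Definition halfline (s : R) : Prop := 0 <= s.
Definition interval0 (c : R) (s : R) : Prop := 0 <= s <= c.

From Stdlib Require Import Reals Lra Lia Classical ClassicalEpsilon.
From Coquelicot Require Import Coquelicot.
Open Scope R_scope.

(* Shooting from the slope at 0.  Fix c > s0 and cut the equation off outside
   [0, c] x [-M, M] with M = dwu 0 * c; the cut-off equation is globally Lipschitz,
   so Picard iteration gives for every slope al a solution U al on [0, c] with
   U al 0 = 0 and (U al)' 0 = al.  A Gronwall estimate for the energy
   |u - v|^2 + |u' - v'|^2 gives uniqueness, continuous dependence on al, and rules
   out double zeros.  While u >= 0 the solution is concave, so u s <= u'(0) s <= M:
   the cut-off is invisible to the three given solutions, which are therefore
   U (dwl 0), U (dw 0) and U (dwu 0).  Positivity of the profile on (0, c] is an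
   open condition in al; at the supremum of the slopes, starting from dwl 0, for
   which it holds, the profile is nonnegative but not positive, cannot vanish
   inside (0, c) (a double zero), and cannot be dw 0 since U (dw 0) vanishes at
   s0 < c; hence it vanishes exactly at c.  The same argument downward from
   dwu 0 gives the second solution. *)

Definition clip (a b x : R) : R := Rmax a (Rmin b x).

Lemma clip_in a b x : a <= b -> a <= clip a b x <= b.
Proof. intros; unfold clip, Rmax, Rmin; repeat destruct Rle_dec; lra. Qed.

Lemma clip_id a b x : a <= x <= b -> clip a b x = x.
Proof. intros; unfold clip, Rmax, Rmin; repeat destruct Rle_dec; lra. Qed.

Lemma clip_lip a b x y : a <= b -> Rabs (clip a b x - clip a b y) <= Rabs (x - y).
Proof.
  intros; unfold clip, Rmax, Rmin; repeat destruct Rle_dec;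
  unfold Rabs; repeat destruct Rcase_abs; lra.
Qed.

Lemma continuity_pt_clip_comp (D : R -> Prop) f a b : a <= b ->
  (forall x, a <= x <= b -> D x) -> (forall x, a <= x <= b -> cont_within D f x) ->
  forall x, continuity_pt (fun y => f (clip a b y)) x.
Proof.
  intros hab hD hc x eps heps.
  destruct (hc (clip a b x) (clip_in a b x hab) eps heps) as [d [hd Hd]].
  exists d; split; [lra|]. intros y [_ hy]; simpl in *; unfold R_dist in *.
  apply Hd; [apply hD, clip_in; lra|].
  eapply Rle_lt_trans; [apply clip_lip; lra | exact hy].
Qed.

Lemma interval0_mono r t : r <= t -> forall y, interval0 r y -> interval0 t y.
Proof. unfold interval0; intros; lra. Qed.

Lemma has_deriv_within_of_derivable (D : R -> Prop) f x d :
  derivable_pt_lim f x d -> has_deriv_within D f x d.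
Proof.
  intros H eps he. destruct (H eps he) as [[del hdel] Hd].
  exists del; split; [exact hdel|]. intros y _ hyx hy.
  replace y with (x + (y - x)) at 1 by ring.
  apply Hd; [lra | exact hy].
Qed.

Lemma has_deriv_within_subset (D1 D2 : R -> Prop) f x d :
  (forall y, D2 y -> D1 y) -> has_deriv_within D1 f x d -> has_deriv_within D2 f x d.
Proof.
  intros hs H eps he. destruct (H eps he) as [del [hd Hd]].
  exists del; split; auto.
Qed.

Lemma has_deriv_within_cont (D : R -> Prop) f x d :
  has_deriv_within D f x d -> cont_within D f x.
Proof.
  intros H eps he. destruct (H 1 Rlt_0_1) as [del [hd Hd]].
  set (k := Rabs d + 2).
  assert (hk : 0 < k) by (unfold k; pose proof (Rabs_pos d); lra).
  exists (Rmin del (eps / k)). split; [apply Rmin_pos; [lra | apply Rdiv_lt_0_compat; lra]|].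
  intros y hy hyx.
  destruct (Req_dec y x) as [->|hne]; [rewrite Rminus_diag, Rabs_R0; lra|].
  assert (hy1 : Rabs (y - x) < del) by (eapply Rlt_le_trans; [exact hyx | apply Rmin_l]).
  assert (hy2 : Rabs (y - x) * k < eps).
  { apply (Rmult_lt_reg_r (/ k)); [apply Rinv_0_lt_compat; lra|].
    rewrite Rmult_assoc, Rinv_r, Rmult_1_r by lra.
    eapply Rlt_le_trans; [exact hyx | apply Rmin_r]. }
  specialize (Hd y hy hne hy1).
  replace (f y - f x) with (((f y - f x) / (y - x) - d) * (y - x) + d * (y - x))
    by (field; lra).
  eapply Rle_lt_trans; [apply Rabs_triang|]. rewrite !Rabs_mult.
  pose proof (Rabs_pos (y - x)). unfold k in hy2. nra.
Qed.

Lemma derivable_of_has_deriv_within_interior (D : R -> Prop) f x d a b :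
  a < x < b -> (forall y, a < y < b -> D y) ->
  has_deriv_within D f x d -> derivable_pt_lim f x d.
Proof.
  intros hx hD H eps he. destruct (H eps he) as [del [hd Hd]].
  assert (hp : 0 < Rmin del (Rmin (x - a) (b - x))) by (repeat apply Rmin_pos; lra).
  exists (mkposreal _ hp). intros k hk hka. simpl in hka.
  pose proof (Rmin_l del (Rmin (x - a) (b - x))).
  pose proof (Rmin_r del (Rmin (x - a) (b - x))).
  pose proof (Rmin_l (x - a) (b - x)). pose proof (Rmin_r (x - a) (b - x)).
  assert (hk' : Rabs k < x - a /\ Rabs k < b - x) by lra.
  destruct hk' as [h3 h4]. apply Rabs_def2 in h3; apply Rabs_def2 in h4.
  replace k with ((x + k) - x) at 2 by ring.
  apply Hd; [apply hD; lra | lra | replace (x + k - x) with k by ring; lra].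
Qed.

Lemma has_deriv_within_lin_comb (D : R -> Prop) u x d k m :
  has_deriv_within D u x d ->
  has_deriv_within D (fun z => k * z + m * u z) x (k + m * d).
Proof.
  intros H eps he.
  assert (hm : 0 < Rabs m + 1) by (pose proof (Rabs_pos m); lra).
  destruct (H (eps / (Rabs m + 1))) as [del [hd Hd]]; [apply Rdiv_lt_0_compat; lra|].
  exists del; split; auto. intros y hy hne hyx. specialize (Hd y hy hne hyx).
  replace ((k * y + m * u y - (k * x + m * u x)) / (y - x) - (k + m * d))
    with (m * ((u y - u x) / (y - x) - d)) by (field; lra).
  rewrite Rabs_mult.
  apply (Rmult_lt_compat_l (Rabs m + 1)) in Hd; [|lra].
  replace ((Rabs m + 1) * (eps / (Rabs m + 1))) with eps in Hd by (field; lra).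
  pose proof (Rabs_pos ((u y - u x) / (y - x) - d)). nra.
Qed.

Lemma has_deriv_within_local_min (D : R -> Prop) f x d r : 0 < r ->
  (forall y, x - r < y < x + r -> D y) -> has_deriv_within D f x d ->
  (forall y, x - r < y < x + r -> f x <= f y) -> d = 0.
Proof.
  intros hr hD H hmin.
  destruct (Req_dec d 0) as [|hne]; auto; exfalso.
  destruct (H (Rabs d)) as [del [hd Hd]]; [apply Rabs_pos_lt; auto|].
  set (k := Rmin del r / 2).
  assert (hk : 0 < k) by (unfold k; assert (0 < Rmin del r) by (apply Rmin_pos; lra); lra).
  assert (hk1 : k < del) by (unfold k; pose proof (Rmin_l del r); lra).
  assert (hk2 : k < r) by (unfold k; pose proof (Rmin_r del r); lra).
  assert (hq : forall y, y <> x -> ((f y - f x) / (y - x)) * (y - x) = f y - f x)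
    by (intros; field; lra).
  destruct (Rlt_dec d 0) as [hlt|hge].
  - specialize (Hd (x + k) (hD (x + k) ltac:(lra)) ltac:(lra) ltac:(rewrite Rabs_right; lra)).
    rewrite (Rabs_left d) in Hd by lra. apply Rabs_def2 in Hd.
    specialize (hq (x + k) ltac:(lra)). specialize (hmin (x + k) ltac:(lra)).
    replace (x + k - x) with k in hq, Hd by ring. nra.
  - specialize (Hd (x - k) (hD (x - k) ltac:(lra)) ltac:(lra) ltac:(rewrite Rabs_left; lra)).
    rewrite (Rabs_right d) in Hd by lra. apply Rabs_def2 in Hd.
    specialize (hq (x - k) ltac:(lra)). specialize (hmin (x - k) ltac:(lra)).
    replace (x - k - x) with (- k) in hq, Hd by ring. nra.
Qed.

Lemma nonincreasing_of_deriv_nonpos f df a b : a <= b ->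
  (forall x, a < x < b -> derivable_pt_lim f x (df x)) ->
  (forall x, a < x < b -> df x <= 0) ->
  (forall x, continuity_pt (fun y => f (clip a b y)) x) -> f b <= f a.
Proof.
  intros hab hd hneg hc.
  (* MVT_gen may return an endpoint, where the sign of [df] is unknown; [Rmin _ 0] repairs that. *)
  destruct (MVT_gen (fun y => f (clip a b y)) a b (fun x => Rmin (df x) 0)) as [x [_ Hx]].
  - intros x hx. rewrite Rmin_left, Rmax_right in hx by lra.
    rewrite Rmin_left by (apply hneg; lra).
    apply (is_derive_ext_loc f).
    + apply (locally_interval _ x a b); simpl; try lra.
      intros y hay hyb. rewrite clip_id; simpl in *; lra.
    + apply is_derive_Reals, hd; lra.
  - intros x _; apply hc.
  - rewrite !clip_id in Hx by lra. pose proof (Rmin_r (df x) 0). nra.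
Qed.

Lemma continuity_pt_clip_of_has_deriv_within f df t : 0 <= t ->
  (forall s, 0 <= s <= t -> has_deriv_within (interval0 t) f s (df s)) ->
  forall x, continuity_pt (fun y => f (clip 0 t y)) x.
Proof.
  intros ht H. apply (continuity_pt_clip_comp (interval0 t)); auto.
  intros x hx. eapply has_deriv_within_cont, H, hx.
Qed.

Lemma nonincreasing_within f df t : 0 <= t ->
  (forall s, 0 <= s <= t -> has_deriv_within (interval0 t) f s (df s)) ->
  (forall s, 0 < s < t -> df s <= 0) -> f t <= f 0.
Proof.
  intros ht H hneg. apply (nonincreasing_of_deriv_nonpos f df); auto.
  - intros x hx. apply (derivable_of_has_deriv_within_interior (interval0 t) f x _ 0 t hx);
      [unfold interval0; intros; lra | apply H; lra].
  - apply (continuity_pt_clip_of_has_deriv_within f df t ht H).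
Qed.

Lemma below_tangent_at_0 u du ddu t : 0 <= t ->
  (forall s, 0 <= s <= t ->
     has_deriv_within (interval0 t) u s (du s) /\ has_deriv_within (interval0 t) du s (ddu s)) ->
  (forall s, 0 <= s <= t -> ddu s <= 0) -> forall s, 0 <= s <= t -> u s <= u 0 + du 0 * s.
Proof.
  intros ht H hneg s hs.
  assert (hdu : forall r, 0 <= r <= t -> du r <= du 0).
  { intros r hr. apply (nonincreasing_within du ddu r); [lra| |intros; apply hneg; lra].
    intros z hz. eapply has_deriv_within_subset; [apply interval0_mono, hr | apply H; lra]. }
  enough (- du 0 * s + 1 * u s <= - du 0 * 0 + 1 * u 0) by lra.
  apply (nonincreasing_within (fun z => - du 0 * z + 1 * u z) (fun z => - du 0 + 1 * du z) s);
    [lra| |intros z hz; pose proof (hdu z ltac:(lra)); lra].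
  intros z hz. apply has_deriv_within_lin_comb.
  eapply has_deriv_within_subset; [apply interval0_mono, hs | apply H; lra].
Qed.

Lemma Rpower_gt_0 x y : 0 < Rpower x y.
Proof. apply exp_pos. Qed.

Lemma exp_monotone x y : x <= y -> exp x <= exp y.
Proof. intros [h| ->]; [left; apply exp_increasing|]; lra. Qed.

Lemma derivable_pt_lim_exp_lin k s : derivable_pt_lim (fun s => exp (k * s)) s (k * exp (k * s)).
Proof.
  replace (k * exp (k * s)) with (exp (k * s) * (k * 1)) by ring.
  apply (derivable_pt_lim_comp (fun s => k * s) exp).
  - apply derivable_pt_lim_scal, derivable_pt_lim_id.
  - apply derivable_pt_lim_exp.
Qed.

Lemma ppow_0 p : ppow p 0 = 0.
Proof. unfold ppow; ring. Qed.

Lemma ppow_nonneg p x : 0 <= x -> 0 <= ppow p x.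
Proof. intros; unfold ppow. pose proof (Rpower_gt_0 (Rabs x) (p - 1)). nra. Qed.

Lemma ppow_opp p x : ppow p (- x) = - ppow p x.
Proof. unfold ppow; rewrite Rabs_Ropp; ring. Qed.

Lemma ppow_Rpower p x : 0 < x -> ppow p x = Rpower x p.
Proof.
  intros hx; unfold ppow. rewrite Rabs_right by lra.
  rewrite <- (Rpower_1 x) at 2 by exact hx. rewrite <- Rpower_plus. f_equal; ring.
Qed.

Lemma ppow_lip_nonneg p M x y : 1 < p -> 0 <= x <= y -> y <= M ->
  0 <= ppow p y - ppow p x <= p * Rpower M (p - 1) * (y - x).
Proof.
  intros hp hxy hyM.
  destruct (Req_dec y 0) as [hy0|hy0]; [replace x with 0 by lra; subst y; rewrite ppow_0; lra|].
  assert (hMpow : forall z, 0 < z <= M -> Rpower z (p - 1) <= Rpower M (p - 1))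
    by (intros; apply Rle_Rpower_l; lra).
  destruct (Req_dec x 0) as [->|hx0].
  - rewrite ppow_0, !Rminus_0_r. unfold ppow. rewrite Rabs_right by lra.
    pose proof (hMpow y ltac:(lra)). pose proof (Rpower_gt_0 y (p - 1)).
    assert (0 <= (p - 1) * Rpower M (p - 1)) by (pose proof (Rpower_gt_0 M (p - 1)); nra). nra.
  - rewrite !ppow_Rpower by lra.
    destruct (MVT_gen (fun z => Rpower z p) x y (fun z => p * Rpower z (p - 1))) as [z [hz Hz]];
      rewrite ?Rmin_left, ?Rmax_right in * by lra.
    + intros z hz. apply is_derive_Reals, derivable_pt_lim_power; lra.
    + intros z hz. apply derivable_continuous_pt.
      exists (p * Rpower z (p - 1)). apply derivable_pt_lim_power; lra.
    + rewrite Hz. pose proof (hMpow z ltac:(lra)). pose proof (Rpower_gt_0 z (p - 1)).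
      assert (Rpower z (p - 1) * (y - x) <= Rpower M (p - 1) * (y - x)) by nra.
      assert (0 <= Rpower z (p - 1) * (y - x)) by nra. nra.
Qed.

Lemma ppow_lip p M x y : 1 < p -> Rabs x <= M -> Rabs y <= M ->
  Rabs (ppow p x - ppow p y) <= p * Rpower M (p - 1) * Rabs (x - y).
Proof.
  intros hp.
  (* for [x <= y], the sign cases reduce to [ppow_lip_nonneg] by oddness of [ppow] *)
  assert (key : forall x y, x <= y -> Rabs x <= M -> Rabs y <= M ->
     Rabs (ppow p x - ppow p y) <= p * Rpower M (p - 1) * Rabs (x - y)).
  { clear x y. intros x y hxy hx hy.
    apply Rabs_le_between in hx; apply Rabs_le_between in hy.
    rewrite (Rabs_left1 (x - y)) by lra.
    destruct (Rle_dec 0 x) as [hx0|hx0].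
    - pose proof (ppow_lip_nonneg p M x y hp (conj hx0 hxy) ltac:(lra)).
      rewrite Rabs_left1; lra.
    - destruct (Rle_dec y 0) as [hy0|hy0].
      + pose proof (ppow_lip_nonneg p M (- y) (- x) hp ltac:(lra) ltac:(lra)).
        rewrite !ppow_opp in *. rewrite Rabs_left1; lra.
      + pose proof (ppow_lip_nonneg p M 0 y hp ltac:(lra) ltac:(lra)).
        pose proof (ppow_lip_nonneg p M 0 (- x) hp ltac:(lra) ltac:(lra)).
        rewrite ppow_opp, ppow_0 in *. rewrite Rabs_left1; lra. }
  intros hx hy. destruct (Rle_dec x y).
  - apply key; auto.
  - rewrite Rabs_minus_sym, (Rabs_minus_sym x). apply key; auto; lra.
Qed.

Lemma nonneg_of_abs_bound (f : R -> R) H : (forall t, Rabs (f t) <= H) -> 0 <= H.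
Proof. intros hb. pose proof (hb 0). pose proof (Rabs_pos (f 0)). lra. Qed.

Lemma continuity_pt_of_lipschitz g L : 0 < L ->
  (forall x y, Rabs (g x - g y) <= L * Rabs (x - y)) -> forall x, continuity_pt g x.
Proof.
  intros hL H x eps he. exists (eps / L). split; [apply Rdiv_lt_0_compat; lra|].
  intros y [_ hy]. simpl in *. unfold R_dist in *.
  eapply Rle_lt_trans; [apply H|].
  apply (Rmult_lt_compat_l L) in hy; auto.
  replace (L * (eps / L)) with eps in hy by (field; lra). exact hy.
Qed.

Lemma continuity_pt_clip a b x : a <= b -> continuity_pt (clip a b) x.
Proof.
  intros hab. apply (continuity_pt_of_lipschitz _ 1); [lra|].
  intros; rewrite Rmult_1_l; apply clip_lip, hab.
Qed.

Lemma half_pow_small K eps : 0 < eps -> exists N, K * (/ 2) ^ N < eps.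
Proof.
  intros he. destruct (Rle_dec K 0) as [hK|hK]; [exists O; simpl; lra|].
  destruct (pow_lt_1_zero (/ 2) ltac:(rewrite Rabs_right; lra) (eps / K)
              ltac:(apply Rdiv_lt_0_compat; lra)) as [N HN].
  exists N. specialize (HN N (le_n N)). rewrite Rabs_right in HN by (left; apply pow_lt; lra).
  apply (Rmult_lt_compat_l K) in HN; [|lra].
  replace (K * (eps / K)) with eps in HN by (field; lra). exact HN.
Qed.

Lemma eq_0_of_le_half_pow x K : (forall n, Rabs x <= K * (/ 2) ^ n) -> x = 0.
Proof.
  intros H. destruct (Req_dec x 0) as [|hne]; auto. exfalso.
  destruct (half_pow_small K (Rabs x) (Rabs_pos_lt x hne)) as [N HN].
  specialize (H N). lra.
Qed.

Definition prim (psi : R -> R) (r : R) : R := RInt psi 0 r.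

Lemma prim_0 psi : prim psi 0 = 0.
Proof. apply (RInt_point (V := R_CompleteNormedModule)). Qed.

Section Primitive.

Variable psi : R -> R.
Hypothesis psi_cont : forall t, continuity_pt psi t.

Lemma ex_RInt_of_continuity a b : ex_RInt psi a b.
Proof.
  apply (@ex_RInt_continuous R_CompleteNormedModule); intros z _.
  apply continuity_pt_filterlim, psi_cont.
Qed.

Lemma prim_deriv r : derivable_pt_lim (prim psi) r (psi r).
Proof.
  apply is_derive_Reals, (is_derive_RInt psi (prim psi) 0 r).
  - exists (mkposreal 1 Rlt_0_1). intros y _.
    apply (@RInt_correct R_CompleteNormedModule), ex_RInt_of_continuity.
  - apply continuity_pt_filterlim, psi_cont.
Qed.

Lemma prim_cont r : continuity_pt (prim psi) r.
Proof. apply derivable_continuous_pt. exists (psi r). apply prim_deriv. Qed.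

Lemma abs_prim_le_const s K : 0 <= s ->
  (forall t, 0 <= t <= s -> Rabs (psi t) <= K) -> Rabs (prim psi s) <= s * K.
Proof.
  intros hs hb. replace (s * K) with ((s - 0) * K) by ring.
  apply abs_RInt_le_const; auto. apply ex_RInt_of_continuity.
Qed.

Lemma abs_prim_le_exp s K lam : 0 <= s -> 0 < lam -> 0 <= K ->
  (forall t, 0 <= t <= s -> Rabs (psi t) <= K * exp (lam * t)) ->
  Rabs (prim psi s) <= K * exp (lam * s) / lam.
Proof.
  intros hs hl hK hb.
  assert (hder : forall t, derivable_pt_lim (fun t => K / lam * exp (lam * t)) t (K * exp (lam * t))).
  { intros t. replace (K * exp (lam * t)) with (K / lam * (lam * exp (lam * t))) by (field; lra).
    apply derivable_pt_lim_scal, derivable_pt_lim_exp_lin. }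
  assert (hcont : forall t, continuity_pt (fun t => K * exp (lam * t)) t).
  { intros t. apply derivable_continuous_pt.
    exists (K * (lam * exp (lam * t))). apply derivable_pt_lim_scal, derivable_pt_lim_exp_lin. }
  assert (E : is_RInt (fun t => K * exp (lam * t)) 0 s
               (minus (K / lam * exp (lam * s)) (K / lam * exp (lam * 0)))).
  { apply (is_RInt_derive (fun t => K / lam * exp (lam * t))).
    - intros x _. apply is_derive_Reals, hder.
    - intros x _. apply continuity_pt_filterlim, hcont. }
  eapply Rle_trans; [apply abs_RInt_le; auto; apply ex_RInt_of_continuity|].
  eapply Rle_trans; [apply RInt_le; auto|].
  - apply (@ex_RInt_continuous R_CompleteNormedModule). intros z _.
    apply continuity_pt_filterlim, (continuity_pt_comp psi Rabs);
      [apply psi_cont | apply Rcontinuity_abs].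
  - eexists; exact E.
  - intros x hx. apply hb; lra.
  - rewrite (is_RInt_unique _ _ _ _ E). unfold minus, plus, opp; simpl.
    rewrite Rmult_0_r, exp_0.
    assert (0 <= K / lam) by (apply Rdiv_le_0_compat; lra). unfold Rdiv in *. lra.
Qed.

End Primitive.

Lemma abs_prim2_le_const psi s K : (forall t, continuity_pt psi t) -> 0 <= s ->
  (forall t, 0 <= t <= s -> Rabs (psi t) <= K) -> Rabs (prim (prim psi) s) <= s * (s * K).
Proof.
  intros hc hs hb.
  assert (hK : 0 <= K) by (pose proof (hb 0 ltac:(lra)); pose proof (Rabs_pos (psi 0)); lra).
  apply abs_prim_le_const; [apply prim_cont, hc | exact hs|].
  intros r hr. eapply Rle_trans; [apply abs_prim_le_const; [exact hc | lra|]|].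
  - intros t ht. apply hb. lra.
  - apply Rmult_le_compat_r; lra.
Qed.

Lemma abs_prim2_le_exp psi s K lam : (forall t, continuity_pt psi t) -> 0 <= s -> 0 < lam -> 0 <= K ->
  (forall t, 0 <= t <= s -> Rabs (psi t) <= K * exp (lam * t)) ->
  Rabs (prim (prim psi) s) <= s * (K * exp (lam * s) / lam).
Proof.
  intros hc hs hl hK hb. apply abs_prim_le_const; [apply prim_cont, hc | exact hs|].
  intros r hr.
  eapply Rle_trans; [apply (abs_prim_le_exp psi hc r K lam); [lra | exact hl | exact hK |]|].
  - intros t ht. apply hb. lra.
  - apply Rmult_le_compat_r; [left; apply Rinv_0_lt_compat; lra|].
    apply Rmult_le_compat_l; [lra|]. apply exp_monotone. nra.
Qed.

Lemma prim_minus psi1 psi2 : (forall t, continuity_pt psi1 t) -> (forall t, continuity_pt psi2 t) ->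
  forall r, prim (fun t => psi1 t - psi2 t) r = prim psi1 r - prim psi2 r.
Proof.
  intros H1 H2 r. apply (RInt_minus psi1 psi2 0 r); apply ex_RInt_of_continuity; auto.
Qed.

Lemma prim2_minus psi1 psi2 : (forall t, continuity_pt psi1 t) -> (forall t, continuity_pt psi2 t) ->
  forall s, prim (prim psi1) s - prim (prim psi2) s = prim (prim (fun t => psi1 t - psi2 t)) s.
Proof.
  intros H1 H2 s. rewrite <- prim_minus by (apply prim_cont; auto).
  apply RInt_ext. intros r _. symmetry. apply prim_minus; auto.
Qed.

Section Picard.

Variables (a g : R -> R) (H L G c al : R).
Hypotheses (a_cont : forall t, continuity_pt a t) (a_bound : forall t, Rabs (a t) <= H)
  (L_pos : 0 < L) (g_lip : forall x y, Rabs (g x - g y) <= L * Rabs (x - y))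
  (g_bound : forall x, Rabs (g x) <= G) (c_pos : 0 < c).

Fixpoint picard (n : nat) : R -> R :=
  match n with
  | O => fun s => al * s
  | S n => fun s => al * s - prim (prim (fun t => a t * g (picard n t))) s
  end.

Let B := c * (c * H * G) + 1.
Let lam := 2 * c * H * L + 1.
Let Q := 2 * B * exp (lam * c).

Lemma picard_consts_pos : 0 <= H /\ 0 <= G /\ 0 < B /\ 0 < lam /\ 0 < Q.
Proof.
  pose proof (nonneg_of_abs_bound a H a_bound) as hH.
  pose proof (nonneg_of_abs_bound g G g_bound) as hG.
  assert (0 <= c * H) by (apply Rmult_le_pos; lra).
  assert (hB : 0 < B) by (unfold B; assert (0 <= c * H * G) by (apply Rmult_le_pos; lra); nra).
  assert (hlam : 0 < lam) by (unfold lam; assert (0 <= c * H * L) by (apply Rmult_le_pos; lra); lra).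
  repeat split; auto. unfold Q. pose proof (exp_pos (lam * c)). nra.
Qed.

Lemma forcing_cont v : (forall t, continuity_pt v t) ->
  forall t, continuity_pt (fun t => a t * g (v t)) t.
Proof.
  intros hv t. apply continuity_pt_mult; auto.
  apply (continuity_pt_comp v g); auto. apply (continuity_pt_of_lipschitz g L); auto.
Qed.

Lemma picard_cont n t : continuity_pt (picard n) t.
Proof.
  revert t; induction n as [|n IH]; intros t; apply derivable_continuous_pt; simpl.
  - exists (al * 1). apply (derivable_pt_lim_scal id), derivable_pt_lim_id.
  - exists (al * 1 - prim (fun t => a t * g (picard n t)) t).
    apply derivable_pt_lim_minus; [apply (derivable_pt_lim_scal id), derivable_pt_lim_id|].
    apply prim_deriv, prim_cont, forcing_cont, IH.
Qed.

Lemma picard_forcing_diff_cont n m t :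
  continuity_pt (fun t => a t * g (picard n t) - a t * g (picard m t)) t.
Proof. apply continuity_pt_minus; apply forcing_cont, picard_cont. Qed.

Lemma picard_diff n m s :
  picard (S n) s - picard (S m) s =
  - prim (prim (fun t => a t * g (picard n t) - a t * g (picard m t))) s.
Proof.
  simpl. rewrite <- prim2_minus by (apply forcing_cont, picard_cont). ring.
Qed.

Lemma abs_forcing_diff_le u v t :
  Rabs (a t * g u - a t * g v) <= H * (L * Rabs (u - v)).
Proof.
  rewrite <- Rmult_minus_distr_l, Rabs_mult.
  apply Rmult_le_compat; auto using Rabs_pos.
Qed.

(* The weight [exp (lam * s)] with [lam >= 2 c H L] makes each iteration a contraction by 1/2. *)
Lemma picard_step n s : 0 <= s <= c ->
  Rabs (picard (S n) s - picard n s) <= B * (/ 2) ^ n * exp (lam * s).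
Proof.
  destruct picard_consts_pos as [hH [hG [hB [hlam hQ]]]].
  revert s. induction n as [|n IH]; intros s hs.
  - simpl. replace (al * s - _ - al * s) with (- prim (prim (fun t => a t * g (al * t))) s) by ring.
    rewrite Rabs_Ropp.
    assert (hcont : forall t, continuity_pt (fun t => a t * g (al * t)) t)
      by (apply (forcing_cont (fun t => al * t)), (picard_cont 0)).
    apply Rle_trans with (s * (s * (H * G))).
    + apply abs_prim2_le_const; [exact hcont | lra|].
      intros t _. rewrite Rabs_mult. apply Rmult_le_compat; auto using Rabs_pos.
    + assert (1 <= exp (lam * s)) by (rewrite <- exp_0; apply exp_monotone; nra).
      assert (s * (s * (H * G)) <= c * (c * H * G)).
      { assert (0 <= H * G) by (apply Rmult_le_pos; lra).
        assert (s * (H * G) <= c * (H * G)) by (apply Rmult_le_compat_r; lra).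
        replace (c * (c * H * G)) with (c * (c * (H * G))) by ring.
        apply Rmult_le_compat; try lra. apply Rmult_le_pos; lra. }
      simpl. rewrite Rmult_1_r. unfold B in *. nra.
  - rewrite picard_diff, Rabs_Ropp.
    pose proof (pow_lt (/ 2) n ltac:(lra)). pose proof (exp_pos (lam * s)).
    eapply Rle_trans; [apply (abs_prim2_le_exp _ s (H * L * (B * (/ 2) ^ n)) lam);
                       auto using picard_forcing_diff_cont; try lra|].
    + repeat apply Rmult_le_pos; lra.
    + intros t ht. eapply Rle_trans; [apply abs_forcing_diff_le|].
      replace (H * L * (B * (/ 2) ^ n) * exp (lam * t))
        with (H * (L * (B * (/ 2) ^ n * exp (lam * t)))) by ring.
      apply Rmult_le_compat_l; [lra|]. apply Rmult_le_compat_l; [lra|]. apply IH; lra.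
    + assert (s * H * L <= lam / 2) by (unfold lam; assert (s * H * L <= c * H * L) by
        (repeat apply Rmult_le_compat_r; lra); lra).
      replace (s * (H * L * (B * (/ 2) ^ n) * exp (lam * s) / lam))
        with (s * H * L / lam * (B * (/ 2) ^ n * exp (lam * s))) by (field; lra).
      replace (B * (/ 2) ^ S n * exp (lam * s)) with (/ 2 * (B * (/ 2) ^ n * exp (lam * s)))
        by (simpl; ring).
      apply Rmult_le_compat_r; [apply Rmult_le_pos; [apply Rmult_le_pos|]; lra|].
      apply (Rmult_le_reg_r lam); [lra|].
      replace (s * H * L / lam * lam) with (s * H * L) by (field; lra). lra.
Qed.

Lemma picard_cauchy n m s : (n <= m)%nat -> 0 <= s <= c ->
  Rabs (picard m s - picard n s) <= Q * (/ 2) ^ n.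
Proof.
  intros hnm hs. destruct picard_consts_pos as [hH [hG [hB [hlam hQ]]]].
  assert (hE : exp (lam * s) <= exp (lam * c)) by (apply exp_monotone, Rmult_le_compat_l; lra).
  assert (key : forall j, Rabs (picard (n + j) s - picard n s)
                          <= Q * ((/ 2) ^ n - (/ 2) ^ (n + j))).
  { induction j as [|j IH]; [rewrite Nat.add_0_r, !Rminus_diag, Rabs_R0; lra|].
    pose proof (picard_step (n + j) s hs) as Hs.
    rewrite Nat.add_succ_r.
    replace (picard (S (n + j)) s - picard n s) with
      ((picard (S (n + j)) s - picard (n + j) s) + (picard (n + j) s - picard n s)) by ring.
    eapply Rle_trans; [apply Rabs_triang|].
    pose proof (pow_lt (/ 2) (n + j) ltac:(lra)).
    assert (B * (/ 2) ^ (n + j) * exp (lam * s) <= B * (/ 2) ^ (n + j) * exp (lam * c))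
      by (apply Rmult_le_compat_l; [apply Rmult_le_pos|]; lra).
    replace ((/ 2) ^ S (n + j)) with ((/ 2) ^ (n + j) * / 2) by (simpl; ring).
    assert (B * (/ 2) ^ (n + j) * exp (lam * c) = Q * (/ 2) ^ (n + j) / 2) by (unfold Q; field).
    lra. }
  replace m with (n + (m - n))%nat by lia.
  eapply Rle_trans; [apply key|].
  pose proof (pow_lt (/ 2) (n + (m - n)) ltac:(lra)). nra.
Qed.

Definition picard_limit s : R := real (Lim_seq (fun n => picard n s)).

Lemma picard_limit_bound s n : 0 <= s <= c ->
  Rabs (picard_limit s - picard n s) <= Q * (/ 2) ^ n.
Proof.
  intros hs.
  assert (hfin : ex_finite_lim_seq (fun n => picard n s)).
  { apply ex_lim_seq_cauchy_corr. intros eps.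
    destruct (half_pow_small (2 * Q) eps (cond_pos eps)) as [N HN].
    exists N. intros i j hi hj.
    pose proof (picard_cauchy N i s hi hs). pose proof (picard_cauchy N j s hj hs).
    replace (picard i s - picard j s) with
      ((picard i s - picard N s) - (picard j s - picard N s)) by ring.
    eapply Rle_lt_trans; [apply Rabs_triang|]. rewrite Rabs_Ropp. lra. }
  destruct hfin as [l Hl]. unfold picard_limit. rewrite (is_lim_seq_unique _ _ Hl). simpl.
  apply is_lim_seq_Reals in Hl.
  apply le_epsilon. intros eps he.
  destruct (Hl eps he) as [N HN].
  specialize (HN (max N n) (Nat.le_max_l _ _)). unfold R_dist in HN.
  pose proof (picard_cauchy n (max N n) s (Nat.le_max_r _ _) hs).
  replace (l - picard n s) with (- (picard (max N n) s - l) + (picard (max N n) s - picard n s)) by ring.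
  eapply Rle_trans; [apply Rabs_triang|]. rewrite Rabs_Ropp. lra.
Qed.

Lemma picard_limit_cont x : 0 <= x <= c -> cont_within (interval0 c) picard_limit x.
Proof.
  intros hx eps he.
  destruct (half_pow_small Q (eps / 3) ltac:(lra)) as [N HN].
  destruct (picard_cont N x (eps / 3) ltac:(lra)) as [d [hd Hd]].
  exists d; split; auto. intros y hy hyx.
  destruct (Req_dec y x) as [->|hne]; [rewrite Rminus_diag, Rabs_R0; lra|].
  pose proof (picard_limit_bound y N hy). pose proof (picard_limit_bound x N hx).
  assert (Rabs (picard N y - picard N x) < eps / 3)
    by (apply Hd; split; [split; [exact I | congruence] | exact hyx]).
  replace (picard_limit y - picard_limit x) with
    ((picard_limit y - picard N y) + (picard N y - picard N x) - (picard_limit x - picard N x)) by ring.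
  unfold Rminus at 1. eapply Rle_lt_trans; [apply Rabs_triang|]. rewrite Rabs_Ropp.
  eapply Rle_lt_trans; [apply Rplus_le_compat_r, Rabs_triang|]. lra.
Qed.

Definition picard_sol (t : R) : R := picard_limit (clip 0 c t).

Lemma picard_sol_cont t : continuity_pt picard_sol t.
Proof. apply (continuity_pt_clip_comp (interval0 c)); [lra | auto | apply picard_limit_cont]. Qed.

Lemma picard_sol_fixed s : 0 <= s <= c ->
  picard_sol s = al * s - prim (prim (fun t => a t * g (picard_sol t))) s.
Proof.
  intros hs. destruct picard_consts_pos as [hH [hG [hB [hlam hQ]]]].
  assert (hphi := forcing_cont picard_sol picard_sol_cont).
  set (phi := fun t => a t * g (picard_sol t)) in *.
  unfold picard_sol at 1. rewrite clip_id by lra. symmetry. apply Rminus_diag_uniq.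
  apply (eq_0_of_le_half_pow _ ((c * c * H * L + 1) * Q)). intros n.
  assert (hQn : 0 <= Q * (/ 2) ^ n) by (pose proof (pow_lt (/ 2) n ltac:(lra)); nra).
  pose proof (picard_limit_bound s (S n) hs) as h1.
  replace ((/ 2) ^ S n) with ((/ 2) ^ n * / 2) in h1 by (simpl; ring).
  assert (h2 : Rabs (al * s - prim (prim phi) s - picard (S n) s)
               <= s * (s * (H * (L * (Q * (/ 2) ^ n))))).
  { simpl. replace (al * s - _ - _) with
      (- (prim (prim phi) s - prim (prim (fun t => a t * g (picard n t))) s)) by ring.
    rewrite Rabs_Ropp, prim2_minus by (auto; apply forcing_cont, picard_cont).
    apply abs_prim2_le_const; [| lra |].
    - intros t; apply continuity_pt_minus; auto; apply forcing_cont, picard_cont.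
    - intros t ht. unfold phi. eapply Rle_trans; [apply abs_forcing_diff_le|].
      apply Rmult_le_compat_l; [lra|]. apply Rmult_le_compat_l; [lra|].
      unfold picard_sol. rewrite clip_id by lra. apply picard_limit_bound; lra. }
  assert (h3 : s * (s * (H * (L * (Q * (/ 2) ^ n)))) <= c * (c * (H * (L * (Q * (/ 2) ^ n))))).
  { assert (0 <= H * (L * (Q * (/ 2) ^ n))) by (apply Rmult_le_pos; [lra | apply Rmult_le_pos; lra]).
    apply Rmult_le_compat; try nra. }
  replace (al * s - prim (prim phi) s - picard_limit s) with
    ((al * s - prim (prim phi) s - picard (S n) s) - (picard_limit s - picard (S n) s)) by ring.
  unfold Rminus at 1. eapply Rle_trans; [apply Rabs_triang|]. rewrite Rabs_Ropp.
  replace ((c * c * H * L + 1) * Q * (/ 2) ^ n) with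
    (c * (c * (H * (L * (Q * (/ 2) ^ n)))) + Q * (/ 2) ^ n) by ring.
  lra.
Qed.

Lemma picard_solution : exists U V : R -> R,
  (forall s, derivable_pt_lim U s (V s)) /\
  (forall s, 0 <= s <= c -> derivable_pt_lim V s (- (a s * g (U s)))) /\
  U 0 = 0 /\ V 0 = al.
Proof.
  assert (hphi := forcing_cont picard_sol picard_sol_cont).
  set (phi := fun t => a t * g (picard_sol t)) in *.
  exists (fun s => al * s - prim (prim phi) s), (fun s => al - prim phi s).
  repeat split.
  - intros s. replace (al - prim phi s) with (al * 1 - prim phi s) by ring.
    apply derivable_pt_lim_minus; [apply (derivable_pt_lim_scal id), derivable_pt_lim_id|].
    apply prim_deriv, prim_cont, hphi.
  - intros s hs. rewrite <- picard_sol_fixed by exact hs. fold (phi s).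
    replace (- phi s) with (0 - phi s) by ring.
    apply derivable_pt_lim_minus; [apply derivable_pt_lim_const | apply prim_deriv, hphi].
  - rewrite prim_0. ring.
  - rewrite prim_0. ring.
Qed.

End Picard.

Lemma gronwall E dE K t : 0 <= t ->
  (forall s, 0 < s < t -> derivable_pt_lim E s (dE s)) ->
  (forall s, 0 < s < t -> Rabs (dE s) <= K * E s) ->
  (forall x, continuity_pt (fun y => E (clip 0 t y)) x) ->
  E t <= E 0 * exp (K * t) /\ E 0 <= E t * exp (K * t).
Proof.
  intros ht hd hb hc.
  (* [sg * E s * exp (- sg * K * s)] is nonincreasing for both signs [sg = 1] and [sg = -1] *)
  assert (key : forall sg, sg * sg = 1 -> sg * E t * exp (- sg * K * t) <= sg * E 0).
  { intros sg hsg.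
    replace (sg * E 0) with (sg * E 0 * exp (- sg * K * 0)) by (rewrite Rmult_0_r, exp_0; ring).
    apply (nonincreasing_of_deriv_nonpos (fun s => sg * E s * exp (- sg * K * s))
             (fun s => (sg * dE s - K * E s) * exp (- sg * K * s))); [exact ht | | |].
    - intros s hs.
      replace ((sg * dE s - K * E s) * exp (- sg * K * s)) with
        (sg * dE s * exp (- sg * K * s) + sg * E s * (- sg * K * exp (- sg * K * s)))
        by (rewrite <- (Rmult_1_l (K * E s)), <- hsg; ring).
      apply (derivable_pt_lim_mult (fun s => sg * E s) (fun s => exp (- sg * K * s))).
      + apply derivable_pt_lim_scal, hd, hs.
      + apply derivable_pt_lim_exp_lin.
    - intros s hs. specialize (hb s hs). apply Rabs_le_between in hb.
      pose proof (exp_pos (- sg * K * s)).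
      assert (sg * dE s - K * E s <= 0) by (destruct (Rle_dec 0 sg); nra). nra.
    - intros x.
      apply (continuity_pt_mult (fun y => sg * E (clip 0 t y)) (fun y => exp (- sg * K * clip 0 t y))).
      + apply (continuity_pt_scal (fun y => E (clip 0 t y))), hc.
      + apply (continuity_pt_comp (clip 0 t) (fun s => exp (- sg * K * s)));
          [apply continuity_pt_clip; lra|].
        apply derivable_continuous_pt. eexists. apply derivable_pt_lim_exp_lin. }
  pose proof (key 1 ltac:(ring)) as k1. pose proof (key (- 1) ltac:(ring)) as k2.
  replace (- (- 1) * K * t) with (K * t) in k2 by ring.
  replace (- (1) * K * t) with (- (K * t)) in k1 by ring.
  rewrite exp_Ropp in k1. pose proof (exp_pos (K * t)).
  split; [|lra].
  apply (Rmult_le_compat_r (exp (K * t))) in k1; [|lra].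
  replace (1 * E t * / exp (K * t) * exp (K * t)) with (E t) in k1 by (field; lra). lra.
Qed.

Definition ode_sol (a g : R -> R) (t : R) (u du : R -> R) : Prop :=
  forall s, 0 <= s <= t ->
    has_deriv_within (interval0 t) u s (du s) /\
    has_deriv_within (interval0 t) du s (- (a s * g (u s))).

Lemma ode_sol_restrict a g t t' u du : ode_sol a g t u du -> 0 <= t' <= t -> ode_sol a g t' u du.
Proof.
  intros H ht s hs. destruct (H s) as [h1 h2]; [lra|].
  split; (eapply has_deriv_within_subset; [| eassumption]); apply interval0_mono; lra.
Qed.

Definition sq_gap (x dx y dy : R -> R) (s : R) : R :=
  (x s - y s) * (x s - y s) + (dx s - dy s) * (dx s - dy s).

Lemma abs_gap_deriv_le d e k K : 0 <= K -> Rabs k <= K * Rabs d ->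
  Rabs (2 * d * e + 2 * e * k) <= (1 + K) * (d * d + e * e).
Proof.
  intros hK hk.
  assert (Rabs (2 * d * e + 2 * e * k) <= 2 * Rabs d * Rabs e + 2 * Rabs e * Rabs k).
  { eapply Rle_trans; [apply Rabs_triang|]. rewrite !Rabs_mult, (Rabs_right 2) by lra. lra. }
  assert (Rabs e * Rabs k <= Rabs e * (K * Rabs d)) by (apply Rmult_le_compat_l; auto using Rabs_pos).
  assert (2 * Rabs d * Rabs e <= d * d + e * e).
  { pose proof (Rsqr_abs d). pose proof (Rsqr_abs e).
    pose proof (Rle_0_sqr (Rabs d - Rabs e)). unfold Rsqr in *. nra. }
  assert (0 <= Rabs d * Rabs e) by (apply Rmult_le_pos; apply Rabs_pos).
  nra.
Qed.

Lemma energy_estimate a g H L t x dx y dy : 0 <= t -> 0 <= L ->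
  (forall s, Rabs (a s) <= H) -> (forall u v, Rabs (g u - g v) <= L * Rabs (u - v)) ->
  ode_sol a g t x dx -> ode_sol a g t y dy ->
  sq_gap x dx y dy t <= sq_gap x dx y dy 0 * exp ((1 + H * L) * t) /\
  sq_gap x dx y dy 0 <= sq_gap x dx y dy t * exp ((1 + H * L) * t).
Proof.
  intros ht hL ha hg hx hy.
  pose proof (nonneg_of_abs_bound a H ha) as hH.
  apply (gronwall _ (fun s => 2 * (x s - y s) * (dx s - dy s) +
                              2 * (dx s - dy s) * (- (a s * g (x s)) + a s * g (y s)))); auto.
  - intros s hs.
    assert (hI : forall z, 0 < z < t -> interval0 t z) by (unfold interval0; intros; lra).
    destruct (hx s ltac:(lra)) as [hx1 hx2]. destruct (hy s ltac:(lra)) as [hy1 hy2].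
    apply (derivable_of_has_deriv_within_interior _ _ _ _ 0 t hs hI) in hx1, hx2, hy1, hy2.
    pose proof (derivable_pt_lim_minus x y s _ _ hx1 hy1) as hd.
    pose proof (derivable_pt_lim_minus dx dy s _ _ hx2 hy2) as he.
    pose proof (derivable_pt_lim_plus _ _ s _ _ (derivable_pt_lim_mult _ _ s _ _ hd hd)
                  (derivable_pt_lim_mult _ _ s _ _ he he)) as hE.
    unfold plus_fct, mult_fct, minus_fct in hE. unfold sq_gap.
    evar (d : R); replace (2 * _ * _ + _) with d; [exact hE | unfold d; ring].
  - intros s _. apply abs_gap_deriv_le; [apply Rmult_le_pos; lra|].
    replace (- (a s * g (x s)) + a s * g (y s)) with (- (a s * (g (x s) - g (y s)))) by ring.
    rewrite Rabs_Ropp, Rabs_mult, Rmult_assoc.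
    apply Rmult_le_compat; auto using Rabs_pos.
  - pose proof (fun f df => continuity_pt_clip_of_has_deriv_within f df t ht) as hc.
    pose proof (hc x dx (fun s hs => proj1 (hx s hs))).
    pose proof (hc y dy (fun s hs => proj1 (hy s hs))).
    pose proof (hc dx _ (fun s hs => proj2 (hx s hs))).
    pose proof (hc dy _ (fun s hs => proj2 (hy s hs))).
    intros z. unfold sq_gap.
    apply (continuity_pt_plus (fun s => _ * _) (fun s => _ * _));
      apply (continuity_pt_mult (fun s => _ - _) (fun s => _ - _));
      apply (continuity_pt_minus (fun s => _) (fun s => _)); auto.
Qed.

Definition pos_on (c : R) (u : R -> R) : Prop := forall s, 0 < s <= c -> 0 < u s.

Section Shooting.

Variables (Phi : R -> R -> R) (c a b : R).
Hypotheses (a_lt_b : a < b)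
  (Phi_cont : forall al s, a <= al <= b -> 0 <= s <= c -> forall eps, 0 < eps ->
     exists del, 0 < del /\
       forall be, a <= be <= b -> Rabs (be - al) < del -> Rabs (Phi be s - Phi al s) < eps)
  (pos_open : forall al, a <= al <= b -> pos_on c (Phi al) ->
     exists rho, 0 < rho /\ forall be, a <= be <= b -> Rabs (be - al) < rho -> pos_on c (Phi be))
  (no_touch : forall al, a <= al <= b -> (forall s, 0 < s <= c -> 0 <= Phi al s) ->
     forall s, 0 < s < c -> Phi al s <> 0).

Lemma shooting_sup : pos_on c (Phi a) -> ~ pos_on c (Phi b) ->
  exists a1, a <= a1 <= b /\ (forall s, 0 < s <= c -> 0 <= Phi a1 s) /\ ~ pos_on c (Phi a1).
Proof.
  intros Pa Pb.
  set (S := fun al => a <= al <= b /\ forall g, a <= g <= al -> pos_on c (Phi g)).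
  assert (Sa : S a) by (split; [lra | intros g hg; replace g with a by lra; exact Pa]).
  destruct (completeness S) as [a1 [hub hlub]]; [exists b; intros x [hx _]; lra | exists a; exact Sa|].
  assert (ha1 : a <= a1 <= b) by (split; [apply hub, Sa | apply hlub; intros x [hx _]; lra]).
  assert (below : forall g, a <= g < a1 -> pos_on c (Phi g)).
  { intros g hg. apply NNPP. intros hn.
    enough (hub_g : is_upper_bound S g) by (specialize (hlub g hub_g); lra).
    intros x [hx Hx]. apply Rnot_lt_le. intros hgx. apply hn, Hx. lra. }
  exists a1. split; [exact ha1|]. split.
  - intros s hs. destruct (Req_dec a1 a) as [->|hna]; [left; apply Pa, hs|].
    apply Rnot_lt_le. intros hneg.
    destruct (Phi_cont a1 s ha1 ltac:(lra) (- Phi a1 s) ltac:(lra)) as [del [hdel Hdel]].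
    pose proof (Rmax_l a (a1 - del / 2)). pose proof (Rmax_r a (a1 - del / 2)).
    set (g := Rmax a (a1 - del / 2)) in *.
    assert (hg : g < a1) by (unfold g, Rmax; destruct Rle_dec; lra).
    specialize (Hdel g ltac:(lra) ltac:(rewrite Rabs_left; lra)).
    specialize (below g ltac:(lra) s hs). apply Rabs_def2 in Hdel. lra.
  - intros Pa1. destruct (Req_dec a1 b) as [->|hnb]; [exact (Pb Pa1)|].
    destruct (pos_open a1 ha1 Pa1) as [rho [hrho Hrho]].
    pose proof (Rmin_l b (a1 + rho / 2)). pose proof (Rmin_r b (a1 + rho / 2)).
    set (a' := Rmin b (a1 + rho / 2)) in *.
    assert (h3 : a1 < a') by (unfold a', Rmin; destruct Rle_dec; lra).
    enough (Sa' : S a') by (specialize (hub a' Sa'); lra).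
    split; [lra|]. intros g hg. destruct (Rlt_dec g a1); [apply below; lra|].
    apply Hrho; [lra|]. rewrite Rabs_right; lra.
Qed.

Lemma shooting s1 : 0 < s1 < c -> pos_on c (Phi a) -> Phi b s1 = 0 ->
  exists al, a < al < b /\ Phi al c = 0 /\ forall s, 0 < s < c -> 0 < Phi al s.
Proof.
  intros hs1 Pa Pb.
  destruct (shooting_sup Pa) as [a1 [ha1 [hnn hnpos]]]; [intros P; specialize (P s1 ltac:(lra)); lra|].
  assert (hpos : forall s, 0 < s < c -> 0 < Phi a1 s).
  { intros s hs. destruct (hnn s ltac:(lra)) as [|hz]; auto.
    exfalso. apply (no_touch a1 ha1 hnn s hs). auto. }
  assert (hc : Phi a1 c = 0).
  { apply NNPP. intros hn. apply hnpos. intros s hs.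
    destruct (Req_dec s c) as [->|hsc]; [destruct (hnn c hs); [auto|congruence] | apply hpos; lra]. }
  exists a1. split; [|auto].
  split; apply Rnot_le_lt; intros he.
  - replace a1 with a in hc by lra. specialize (Pa c ltac:(lra)). lra.
  - replace a1 with b in hnn by lra. exact (no_touch b ltac:(lra) hnn s1 hs1 Pb).
Qed.

End Shooting.

Section SolutionFamily.

Variables (a g : R -> R) (H L c : R) (U V : R -> R -> R).
Hypotheses (a_bound : forall t, Rabs (a t) <= H) (L_nonneg : 0 <= L)
  (g_lip : forall x y, Rabs (g x - g y) <= L * Rabs (x - y)) (g_0 : g 0 = 0) (c_pos : 0 < c)
  (UV_sol : forall al, ode_sol a g c (U al) (V al) /\ U al 0 = 0 /\ V al 0 = al).

Let K := 1 + H * L.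

Lemma family_rate_nonneg : 0 <= K.
Proof. pose proof (nonneg_of_abs_bound a H a_bound). unfold K. nra. Qed.

Lemma family_growth_ge_1 : 1 <= exp (K * c).
Proof. rewrite <- exp_0. apply exp_monotone. pose proof family_rate_nonneg. nra. Qed.

Lemma family_gap_le al be s : 0 <= s <= c ->
  sq_gap (U al) (V al) (U be) (V be) s <= (al - be) * (al - be) * exp (K * c).
Proof.
  intros hs. destruct (UV_sol al) as [ha [ha0 ha1]], (UV_sol be) as [hb [hb0 hb1]].
  destruct (energy_estimate a g H L s (U al) (V al) (U be) (V be)) as [e _]; auto; try lra;
    try (eapply ode_sol_restrict; eauto; lra).
  unfold sq_gap in *. rewrite ha0, hb0, ha1, hb1 in e.
  eapply Rle_trans; [exact e|].
  replace ((0 - 0) * (0 - 0) + (al - be) * (al - be)) with ((al - be) * (al - be)) by ring.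
  apply Rmult_le_compat_l; [apply Rle_0_sqr|]. apply exp_monotone.
  apply Rmult_le_compat_l; [apply family_rate_nonneg | lra].
Qed.

Lemma family_cont_param al eps : 0 < eps -> exists del, 0 < del /\
  forall be, Rabs (be - al) < del -> forall s, 0 <= s <= c ->
    Rabs (U be s - U al s) < eps /\ Rabs (V be s - V al s) < eps.
Proof.
  intros he. pose proof family_growth_ge_1 as hZ. set (Z := exp (K * c)) in *.
  exists (eps / Z). split; [apply Rdiv_lt_0_compat; lra|].
  intros be hbe s hs.
  rewrite <- (Rabs_right eps) by lra. apply triangle_rectangle_lt.
  pose proof (family_gap_le be al s hs) as hgap. unfold sq_gap, Rsqr in *. fold Z in hgap.
  assert (hbZ : Rabs (be - al) * Z < eps).
  { apply (Rmult_lt_compat_r Z) in hbe; [|lra].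
    replace (eps / Z * Z) with eps in hbe by (field; lra). exact hbe. }
  pose proof (Rsqr_abs (be - al)). pose proof (Rabs_pos (be - al)). unfold Rsqr in *.
  assert ((be - al) * (be - al) * Z <= (Rabs (be - al) * Z) * (Rabs (be - al) * Z)) by nra.
  assert ((Rabs (be - al) * Z) * (Rabs (be - al) * Z) < eps * eps)
    by (apply Rmult_le_0_lt_compat; try apply Rmult_le_pos; lra).
  lra.
Qed.

Lemma family_unique al y dy t : 0 <= t <= c -> ode_sol a g t y dy -> y 0 = 0 -> dy 0 = al ->
  forall s, 0 <= s <= t -> U al s = y s.
Proof.
  intros ht hy hy0 hdy0 s hs. destruct (UV_sol al) as [ha [ha0 ha1]].
  destruct (energy_estimate a g H L s (U al) (V al) y dy) as [e _]; auto; try lra;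
    try (eapply ode_sol_restrict; eauto; lra).
  unfold sq_gap in e. rewrite ha0, hy0, ha1, hdy0 in e.
  replace ((0 - 0) * (0 - 0) + (al - al) * (al - al)) with 0 in e by ring.
  pose proof (Rle_0_sqr (V al s - dy s)). unfold Rsqr in *. nra.
Qed.

Lemma family_no_interior_touch al : al <> 0 ->
  (forall s, 0 < s <= c -> 0 <= U al s) -> forall s, 0 < s < c -> U al s <> 0.
Proof.
  intros hal hnn st hst hz. destruct (UV_sol al) as [ha [ha0 ha1]].
  pose proof (Rmin_l st (c - st)). pose proof (Rmin_r st (c - st)).
  set (r := Rmin st (c - st)) in *.
  assert (hr : 0 < r) by (unfold r; apply Rmin_pos; lra).
  assert (hV : V al st = 0).
  { apply (has_deriv_within_local_min (interval0 c) (U al) st (V al st) r hr).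
    - unfold interval0; intros; lra.
    - apply (proj1 (ha st ltac:(lra))).
    - intros y hy. rewrite hz. destruct (Req_dec y 0) as [->|]; [lra | apply hnn; lra]. }
  (* a double zero at [st] makes [U al] coincide with the zero solution, whose slope at 0 is 0 *)
  assert (hzero : ode_sol a g st (fun _ => 0) (fun _ => 0)).
  { intros s _. rewrite g_0, Rmult_0_r, Ropp_0.
    split; apply has_deriv_within_of_derivable, derivable_pt_lim_const. }
  destruct (energy_estimate a g H L st (U al) (V al) (fun _ => 0) (fun _ => 0)) as [_ e]; auto; try lra.
  { eapply ode_sol_restrict; eauto; lra. }
  unfold sq_gap in e. rewrite ha0, ha1, hz, hV in e.
  replace ((0 - 0) * (0 - 0) + (0 - 0) * (0 - 0)) with 0 in e by ring.
  rewrite Rmult_0_l in e. nra.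
Qed.

Lemma family_pos_open al : 0 < al -> pos_on c (U al) ->
  exists rho, 0 < rho /\ forall be, Rabs (be - al) < rho -> pos_on c (U be).
Proof.
  intros hal hpos. destruct (UV_sol al) as [ha [ha0 ha1]].
  (* near 0 the slope of [U be] stays above [al / 4]; away from 0, [U al] has a positive minimum *)
  destruct (has_deriv_within_cont _ _ _ _ (proj2 (ha 0 ltac:(lra))) (al / 2) ltac:(lra))
    as [d0 [hd0 Hd0]].
  pose proof (Rmin_l (d0 / 2) c). pose proof (Rmin_r (d0 / 2) c).
  set (del := Rmin (d0 / 2) c) in *.
  assert (hdel : 0 < del) by (unfold del; apply Rmin_pos; lra).
  destruct (continuity_ab_min (fun y => U al (clip 0 c y)) del c ltac:(fold del; lra)
    (fun x _ => continuity_pt_clip_of_has_deriv_within (U al) (V al) c ltac:(lra)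
                  (fun s hs => proj1 (ha s hs)) x)) as [mx [hmx hmxr]].
  simpl in hmx. rewrite (clip_id 0 c mx) in hmx by lra.
  assert (hm : 0 < U al mx) by (apply hpos; lra).
  destruct (family_cont_param al (Rmin (U al mx) (al / 4))) as [rho [hrho Hrho]];
    [apply Rmin_pos; lra|].
  pose proof (Rmin_l (U al mx) (al / 4)). pose proof (Rmin_r (U al mx) (al / 4)).
  exists rho. split; auto. intros be hbe s hs.
  destruct (Rle_dec del s) as [hds|hds].
  - destruct (Hrho be hbe s ltac:(lra)) as [h1 _].
    specialize (hmx s ltac:(lra)). rewrite (clip_id 0 c s) in hmx by lra.
    apply Rabs_def2 in h1. lra.
  - destruct (UV_sol be) as [hb [hb0 hb1]].
    enough (al / 4 * s + (-1) * U be s <= al / 4 * 0 + (-1) * U be 0) by nra.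
    apply (nonincreasing_within (fun z => al / 4 * z + (-1) * U be z)
                                (fun z => al / 4 + (-1) * V be z) s);
      [lra| |].
    + intros r hr. apply has_deriv_within_lin_comb.
      eapply has_deriv_within_subset; [apply interval0_mono | apply (hb r)]; lra.
    + intros r hr. destruct (Hrho be hbe r ltac:(lra)) as [_ h2].
      assert (hV : Rabs (V al r - al) < al / 2).
      { rewrite <- ha1 at 2. apply Hd0; [unfold interval0; lra | rewrite Rminus_0_r, Rabs_right; lra]. }
      apply Rabs_def2 in h2. apply Rabs_def2 in hV. lra.
Qed.

Lemma family_shoot_up al1 al2 s1 : 0 < al1 < al2 -> 0 < s1 < c ->
  pos_on c (U al1) -> U al2 s1 = 0 ->
  exists al, al1 < al < al2 /\ U al c = 0 /\ forall s, 0 < s < c -> 0 < U al s.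
Proof.
  intros hal hs1 hpos hzero. apply (shooting U c al1 al2 ltac:(lra)) with (s1 := s1); auto.
  - intros al s _ hs eps he. destruct (family_cont_param al eps he) as [del [hdel Hdel]].
    exists del. split; [exact hdel|]. intros be _ hbe. apply (Hdel be hbe s hs).
  - intros al hal' Pal. destruct (family_pos_open al ltac:(lra) Pal) as [rho [hrho Hrho]].
    exists rho. split; auto.
  - intros al hal'. apply family_no_interior_touch. lra.
Qed.

Lemma family_shoot_down al1 al2 s1 : 0 < al2 < al1 -> 0 < s1 < c ->
  pos_on c (U al1) -> U al2 s1 = 0 ->
  exists al, al2 < al < al1 /\ U al c = 0 /\ forall s, 0 < s < c -> 0 < U al s.
Proof.
  intros hal hs1 hpos hzero.
  enough (E : exists al, - al1 < al < - al2 /\ U (- al) c = 0 /\ forall s, 0 < s < c -> 0 < U (- al) s).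
  { destruct E as [al [hal' [hc Hpos]]]. exists (- al). split; [lra | auto]. }
  apply (shooting (fun al => U (- al)) c (- al1) (- al2) ltac:(lra)) with (s1 := s1);
    rewrite ?Ropp_involutive; auto.
  - intros be s _ hs eps he. destruct (family_cont_param (- be) eps he) as [del [hdel Hdel]].
    exists del. split; [exact hdel|]. intros be' _ hbe. apply (Hdel (- be')); [|exact hs].
    replace (- be' - - be) with (- (be' - be)) by ring. rewrite Rabs_Ropp. exact hbe.
  - intros be hbe Pbe. destruct (family_pos_open (- be) ltac:(lra) Pbe) as [rho [hrho Hrho]].
    exists rho. split; [exact hrho|]. intros be' _ hbe'. apply Hrho.
    replace (- be' - - be) with (- (be' - be)) by ring. rewrite Rabs_Ropp. exact hbe'.
  - intros be hbe. apply family_no_interior_touch. lra.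
Qed.

End SolutionFamily.

Lemma ode_sol_ext a g a' g' t u du :
  (forall s, 0 <= s <= t -> a s * g (u s) = a' s * g' (u s)) ->
  ode_sol a g t u du -> ode_sol a' g' t u du.
Proof. intros he H s hs. rewrite <- he by exact hs. apply H, hs. Qed.

Lemma ode_sol_of_is_sol h p y dy t : is_sol h p halfline y dy -> ode_sol h (ppow p) t y dy.
Proof.
  intros H s hs. destruct (H s ltac:(unfold halfline; lra)) as [h1 h2].
  split; (eapply has_deriv_within_subset; [| eassumption]); unfold interval0, halfline; intros; lra.
Qed.

Lemma nonneg_of_pos_interior y t : y 0 = 0 -> 0 <= y t ->
  (forall s, 0 < s < t -> 0 < y s) -> forall s, 0 <= s <= t -> 0 <= y s.
Proof.
  intros h0 ht hpos s hs.
  destruct (Req_dec s 0) as [->|]; [lra|]. destruct (Req_dec s t) as [->|]; [lra|].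
  left; apply hpos; lra.
Qed.

Lemma ode_sol_abs_le a g t u du M : 0 <= t ->
  (forall s, 0 <= s <= t -> 0 <= a s) -> (forall x, 0 <= x -> 0 <= g x) ->
  ode_sol a g t u du -> u 0 = 0 -> 0 <= du 0 -> du 0 * t <= M ->
  (forall s, 0 <= s <= t -> 0 <= u s) -> forall s, 0 <= s <= t -> Rabs (u s) <= M.
Proof.
  intros ht ha hg H hu0 hdu hM hnn s hs.
  assert (u s <= u 0 + du 0 * s).
  { apply (below_tangent_at_0 u du (fun s => - (a s * g (u s))) t ht H); [|exact hs].
    intros r hr. pose proof (ha r hr). pose proof (hg (u r) (hnn r hr)). nra. }
  pose proof (hnn s hs). rewrite Rabs_right by lra. nra.
Qed.

Lemma nonneg_of_pos_on_halfline h : (forall s, 0 <= s -> cont_within halfline h s) ->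
  (forall s, 0 < s -> 0 < h s) -> forall s, 0 <= s -> 0 <= h s.
Proof.
  intros hc hp s [hs| <-]; [left; apply hp, hs|].
  apply Rnot_lt_le. intros hneg.
  destruct (hc 0 (Rle_refl 0) (- h 0) ltac:(lra)) as [d [hd Hd]].
  specialize (Hd (d / 2) ltac:(unfold halfline; lra) ltac:(rewrite Rminus_0_r, Rabs_right; lra)).
  specialize (hp (d / 2) ltac:(lra)). apply Rabs_def2 in Hd. lra.
Qed.

Definition trunc_coef (h : R -> R) (c s : R) : R := h (clip 0 c s).

Definition trunc_nonlin (p M x : R) : R := ppow p (clip (- M) M x).

Section Truncation.

Variables (p : R) (h : R -> R) (c M : R).
Hypotheses (p_gt_1 : 1 < p) (h_cont : forall s, 0 <= s -> cont_within halfline h s)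
  (h_nonneg : forall s, 0 <= s -> 0 <= h s) (c_pos : 0 < c) (M_pos : 0 < M).

Let L := p * Rpower M (p - 1).

Lemma trunc_coef_cont t : continuity_pt (trunc_coef h c) t.
Proof.
  apply (continuity_pt_clip_comp halfline); [lra | unfold halfline; intros; lra |].
  intros; apply h_cont; lra.
Qed.

Lemma trunc_coef_nonneg s : 0 <= trunc_coef h c s.
Proof. apply h_nonneg, clip_in; lra. Qed.

Lemma trunc_coef_bounded : exists H, forall t, Rabs (trunc_coef h c t) <= H.
Proof.
  destruct (continuity_ab_maj (trunc_coef h c) 0 c ltac:(lra) (fun t _ => trunc_coef_cont t))
    as [m [hm _]].
  exists (trunc_coef h c m). intros t.
  rewrite Rabs_right by (apply Rle_ge, trunc_coef_nonneg).
  replace (trunc_coef h c t) with (trunc_coef h c (clip 0 c t))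
    by (unfold trunc_coef; rewrite (clip_id 0 c (clip 0 c t)); [|apply clip_in]; lra).
  apply hm, clip_in; lra.
Qed.

Lemma trunc_nonlin_lip x y : Rabs (trunc_nonlin p M x - trunc_nonlin p M y) <= L * Rabs (x - y).
Proof.
  unfold trunc_nonlin. eapply Rle_trans; [apply ppow_lip; auto; apply Rabs_le, clip_in; lra|].
  apply Rmult_le_compat_l; [unfold L; pose proof (Rpower_gt_0 M (p - 1)); nra | apply clip_lip; lra].
Qed.

Lemma trunc_nonlin_0 : trunc_nonlin p M 0 = 0.
Proof. unfold trunc_nonlin. rewrite clip_id by lra. apply ppow_0. Qed.

Lemma trunc_nonlin_nonneg x : 0 <= x -> 0 <= trunc_nonlin p M x.
Proof. intros hx. apply ppow_nonneg. unfold clip, Rmax, Rmin. repeat destruct Rle_dec; lra. Qed.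

Lemma trunc_forcing_eq s x : 0 <= s <= c -> Rabs x <= M ->
  trunc_coef h c s * trunc_nonlin p M x = h s * ppow p x.
Proof.
  intros hs hx. unfold trunc_coef, trunc_nonlin.
  rewrite !clip_id; auto. apply Rabs_le_between, hx.
Qed.

Lemma trunc_ode_sol_of_is_sol y dy t : is_sol h p halfline y dy -> y 0 = 0 ->
  0 <= t <= c -> 0 <= dy 0 -> dy 0 * t <= M -> (forall s, 0 <= s <= t -> 0 <= y s) ->
  ode_sol (trunc_coef h c) (trunc_nonlin p M) t y dy.
Proof.
  intros hy hy0 ht hdy hM hnn. pose proof (ode_sol_of_is_sol h p y dy t hy) as hsol.
  apply (ode_sol_ext h (ppow p)); [|exact hsol].
  intros s hs. symmetry. apply trunc_forcing_eq; [lra|].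
  apply (ode_sol_abs_le h (ppow p) t y dy); auto; [lra | | apply ppow_nonneg].
  intros r hr. apply h_nonneg. lra.
Qed.

Lemma is_sol_of_trunc_ode_sol u du : ode_sol (trunc_coef h c) (trunc_nonlin p M) c u du ->
  u 0 = 0 -> 0 <= du 0 -> du 0 * c <= M -> (forall s, 0 <= s <= c -> 0 <= u s) ->
  is_sol h p (interval0 c) u du.
Proof.
  intros hsol hu0 hdu hM hnn.
  apply (ode_sol_ext (trunc_coef h c) (trunc_nonlin p M)); [|exact hsol].
  intros s hs. apply trunc_forcing_eq; [lra|].
  apply (ode_sol_abs_le (trunc_coef h c) (trunc_nonlin p M) c u du); auto;
    [lra | | apply trunc_nonlin_nonneg].
  intros r _. apply trunc_coef_nonneg.
Qed.

Lemma trunc_family : exists U V : R -> R -> R, forall al,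
  ode_sol (trunc_coef h c) (trunc_nonlin p M) c (U al) (V al) /\ U al 0 = 0 /\ V al 0 = al.
Proof.
  destruct trunc_coef_bounded as [H hH].
  assert (hL : 0 < L) by (unfold L; pose proof (Rpower_gt_0 M (p - 1)); nra).
  assert (hG : forall x, Rabs (trunc_nonlin p M x) <= L * M).
  { intros x. unfold trunc_nonlin. rewrite <- (Rminus_0_r (ppow p _)), <- (ppow_0 p).
    pose proof (clip_in (- M) M x ltac:(lra)).
    eapply Rle_trans; [apply (ppow_lip p M); auto; apply Rabs_le; lra|].
    apply Rmult_le_compat_l; [lra|]. rewrite Rminus_0_r. apply Rabs_le. lra. }
  assert (hsol : forall al, exists UV : (R -> R) * (R -> R),
    ode_sol (trunc_coef h c) (trunc_nonlin p M) c (fst UV) (snd UV) /\ fst UV 0 = 0 /\ snd UV 0 = al).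
  { intros al.
    destruct (picard_solution (trunc_coef h c) (trunc_nonlin p M) H L (L * M) c al)
      as [U [V [hU [hV [hU0 hV0]]]]]; auto using trunc_coef_cont, trunc_nonlin_lip.
    exists (U, V). repeat split; auto; apply has_deriv_within_of_derivable; auto. }
  destruct (choice _ hsol) as [f hf].
  exists (fun al => fst (f al)), (fun al => snd (f al)). exact hf.
Qed.

End Truncation.

Section TwoSolutions.

Variables (p : R) (h wl dwl wu dwu w dw : R -> R) (s0 : R).
Hypotheses (p_gt_1 : 1 < p)
  (h_cont : forall s, 0 <= s -> cont_within halfline h s) (h_pos : forall s, 0 < s -> 0 < h s)
  (wl_sol : is_sol h p halfline wl dwl) (wu_sol : is_sol h p halfline wu dwu)
  (w_sol : is_sol h p halfline w dw)
  (wl_0 : wl 0 = 0) (wu_0 : wu 0 = 0) (w_0 : w 0 = 0)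
  (dwl_pos : 0 < dwl 0) (dwl_lt_dw : dwl 0 < dw 0) (dw_lt_dwu : dw 0 < dwu 0)
  (wl_pos : forall s, 0 < s -> 0 < wl s) (wu_pos : forall s, 0 < s -> 0 < wu s)
  (s0_pos : 0 < s0) (w_pos : forall s, 0 < s < s0 -> 0 < w s) (w_s0 : w s0 = 0).

Let h_nonneg := nonneg_of_pos_on_halfline h h_cont h_pos.

Lemma two_positive_solutions c : s0 < c ->
  exists w1 dw1 w2 dw2 : R -> R,
    is_sol h p (interval0 c) w1 dw1 /\ w1 0 = 0 /\ w1 c = 0 /\ (forall s, 0 < s < c -> 0 < w1 s) /\
    is_sol h p (interval0 c) w2 dw2 /\ w2 0 = 0 /\ w2 c = 0 /\ (forall s, 0 < s < c -> 0 < w2 s) /\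
    dwl 0 < dw1 0 /\ dw1 0 < dw 0 /\ dw 0 < dw2 0 /\ dw2 0 < dwu 0.
Proof.
  intros hc.
  (* every nonnegative solution with initial slope at most [dwu 0] stays below [M] on [0, c] *)
  set (M := dwu 0 * c).
  assert (hM : 0 < M) by (unfold M; nra).
  set (a := trunc_coef h c). set (g := trunc_nonlin p M).
  destruct (trunc_family p h c M) as [U [V hUV]]; auto; [lra|].
  destruct (trunc_coef_bounded h c) as [H hH]; auto; [lra|].
  set (L := p * Rpower M (p - 1)).
  assert (hL : 0 <= L) by (unfold L; pose proof (Rpower_gt_0 M (p - 1)); nra).
  pose proof (trunc_nonlin_lip p M p_gt_1 hM) as hg.
  pose proof (trunc_nonlin_0 p M hM) as hg0.
  assert (coincide : forall y dy t, is_sol h p halfline y dy -> y 0 = 0 -> 0 <= dy 0 <= dwu 0 ->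
            0 <= t <= c -> 0 <= y t -> (forall s, 0 < s < t -> 0 < y s) ->
            forall s, 0 <= s <= t -> U (dy 0) s = y s).
  { intros y dy t hy hy0 hdy ht hyt hpos.
    apply (family_unique a g H L c U V hH hL hg hUV (dy 0) y dy t ht); [|exact hy0|reflexivity].
    apply trunc_ode_sol_of_is_sol; auto; [lra | unfold M; nra | apply nonneg_of_pos_interior; auto]. }
  assert (pos_transfer : forall y dy, is_sol h p halfline y dy -> y 0 = 0 -> 0 <= dy 0 <= dwu 0 ->
            (forall s, 0 < s -> 0 < y s) -> pos_on c (U (dy 0))).
  { intros y dy hy hy0 hdy hpos s hs.
    rewrite (coincide y dy c); auto; try lra; [| left |]; intros; apply hpos; lra. }
  pose proof (pos_transfer wl dwl wl_sol wl_0 ltac:(lra) wl_pos) as Pl.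
  pose proof (pos_transfer wu dwu wu_sol wu_0 ltac:(lra) wu_pos) as Pu.
  assert (Z : U (dw 0) s0 = 0) by (rewrite (coincide w dw s0); auto; lra).
  destruct (family_shoot_up a g H L c U V hH hL hg hg0 ltac:(lra) hUV (dwl 0) (dw 0) s0
              ltac:(lra) ltac:(lra) Pl Z) as [a1 [ha1 [hc1 hpos1]]].
  destruct (family_shoot_down a g H L c U V hH hL hg hg0 ltac:(lra) hUV (dwu 0) (dw 0) s0
              ltac:(lra) ltac:(lra) Pu Z) as [a2 [ha2 [hc2 hpos2]]].
  destruct (hUV a1) as [_ [hU1 hV1]]. destruct (hUV a2) as [_ [hU2 hV2]].
  assert (to_real : forall al, 0 <= al <= dwu 0 -> U al c = 0 -> (forall s, 0 < s < c -> 0 < U al s) ->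
            is_sol h p (interval0 c) (U al) (V al)).
  { intros al hal hUc hpos. destruct (hUV al) as [hsol [hU0 hV0]].
    apply (is_sol_of_trunc_ode_sol p h c M); rewrite ?hV0; auto; try lra; [unfold M; nra|].
    apply nonneg_of_pos_interior; auto; lra. }
  exists (U a1), (V a1), (U a2), (V a2). rewrite hV1, hV2.
  repeat split; auto; try lra; apply to_real; auto; lra.
Qed.

End TwoSolutions.

Theorem lemma2p8 (p : R) (h : R -> R)
  (hp : 1 < p)
  (hcont : forall s, 0 <= s -> cont_within halfline h s)
  (hpos : forall s, 0 < s -> 0 < h s)
  (wl dwl wu dwu : R -> R)
  (hsl : is_sol h p halfline wl dwl)
  (hsu : is_sol h p halfline wu dwu)
  (hl0 : wl 0 = 0) (hu0 : wu 0 = 0)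
  (hd : 0 < dwl 0 /\ dwl 0 < dwu 0)
  (hlpos : forall s, 0 < s -> 0 < wl s)
  (hupos : forall s, 0 < s -> 0 < wu s)
  (w dw : R -> R) (s0 : R)
  (hs : is_sol h p halfline w dw)
  (hw0 : w 0 = 0)
  (hdw : dwl 0 < dw 0 /\ dw 0 < dwu 0)
  (hs0 : 0 < s0)
  (hwpos : forall s, 0 < s < s0 -> 0 < w s)
  (hws0 : w s0 = 0) :
  exists C : R, 0 < C /\ forall c : R, C <= c ->
    exists w1 dw1 w2 dw2 : R -> R,
      is_sol h p (interval0 c) w1 dw1 /\ w1 0 = 0 /\ w1 c = 0 /\
      (forall s, 0 < s < c -> 0 < w1 s) /\
      is_sol h p (interval0 c) w2 dw2 /\ w2 0 = 0 /\ w2 c = 0 /\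
      (forall s, 0 < s < c -> 0 < w2 s) /\
      dwl 0 < dw1 0 /\ dw1 0 < dw 0 /\ dw 0 < dw2 0 /\ dw2 0 < dwu 0.
Proof.
  exists (s0 + 1). split; [lra|]. intros c hc.
  apply (two_positive_solutions p h wl dwl wu dwu w dw s0); tauto || lra.
Qed.
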